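(* Let $T_1,\dots,T_m:[0,1]\to[0,1]$ be $C^1$ maps with $T_i'(x)>0$ for all $x$, such that $T_i((0,1))\cap T_j((0,1))=\emptyset$ for $i\ne j$, and such that $D_n(\omega)\to0$ as $n\to\infty$ uniformly in $\omega\in\Sigma$. Then \[ \lim_{n\to\infty}\sup_{\omega\in\Sigma}\left|-\frac1n\log D_n(\omega)-A_ng(\omega)\right|=0. \]
   Context: $\Sigma=\{1,\dots,m\}^{\mathbb N}$ with shift $\sigma$; $\Pi(\omega)=\lim_{n\to\infty}T_{\omega_1}\circ\cdots\circ T_{\omega_n}(0)$. $D_n(\omega)=\operatorname{diam}(T_{\omega_1}\circ\cdots\circ T_{\omega_n}([0,1]))$. $g(\omega)=-\log T'_{\omega_1}(\Pi(\sigma\omega))$ and $A_ng(\omega)=\frac1n\sum_{i=0}^{n-1}g(\sigma^i\omega)$. *)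

From HB Require Import structures.
From mathcomp Require Import all_boot all_order all_algebra.
From mathcomp Require Import all_classical all_reals all_analysis.
Set Implicit Arguments. Unset Strict Implicit. Unset Printing Implicit Defensive.
Import Order.TTheory GRing.Theory Num.Theory.
Import numFieldNormedType.Exports.
Local Open Scope classical_set_scope.
Local Open Scope ring_scope.

Section Defs.
Variables (R : realType) (m : nat).

Definition has_deriv01 (f f' : R -> R) : Prop :=
  forall x, x \in `[0, 1] -> forall eps : R, 0 < eps ->
    exists2 delta : R, 0 < delta &
      forall y, y \in `[0, 1] -> `|y - x| < delta ->
        `|f y - f x - f' x * (y - x)| <= eps * `|y - x|.

Definition C1_01 (f f' : R -> R) : Prop :=
  has_deriv01 f f' /\ {within `[0, 1], continuous f'}.

Variable T : 'I_m -> R -> R.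

(* T_{w_1} o ... o T_{w_n}  (w_1 is w 0) *)
Fixpoint compn (n : nat) (w : nat -> 'I_m) : R -> R :=
  match n with
  | 0%N => id
  | n'.+1 => fun x => T (w 0%N) (compn n' (fun k => w k.+1) x)
  end.

Definition shift (w : nat -> 'I_m) : nat -> 'I_m := fun k => w k.+1.

Definition Pi (w : nat -> 'I_m) : R := limn (fun n => compn n w 0).

Definition diam (A : set R) : R := sup [set `|x.1 - x.2| | x in A `*` A].

Definition Dn (n : nat) (w : nat -> 'I_m) : R := diam (compn n w @` `[0, 1]).

Variable dT : 'I_m -> R -> R.  (* dT i = T_i' *)

Definition g (w : nat -> 'I_m) : R := - ln (dT (w 0%N) (Pi (shift w))).

Definition An (n : nat) (w : nat -> 'I_m) : R :=
  n%:R^-1 * \sum_(0 <= i < n) g (iter i shift w).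

End Defs.

From HB Require Import structures.
From mathcomp Require Import all_boot all_order all_algebra.
From mathcomp Require Import all_classical all_reals all_analysis.
From mathcomp Require Import ring lra.
Import Order.TTheory GRing.Theory Num.Theory.
Import numFieldNormedType.Exports.
Local Open Scope classical_set_scope.
Local Open Scope ring_scope.

(* By the mean value theorem, D_{n+1}(w) = T'_{w_0}(c) D_n(shift w) for some c
   in the cylinder interval T_{w_1} o ... o T_{w_n}([0,1]), which also contains
   Pi(shift w). Unrolling, log D_n(w) + n A_n g(w) is a sum of n differences
   log T'(c_k) - log T'(Pi(shift^{k+1} w)) between points of a cylinder of
   depth n-k-1. Once that depth is at least the N given by the uniform decay
   of D_n, the cylinder is shorter than a modulus of uniform continuity of
   log T', so those terms are at most eps; the remaining N terms are bounded by
   the oscillation of log T'. Hence the error is at most n eps + N B. *)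

Lemma in_itv01 {R : realType} {a b x : R} :
  0 <= a -> b <= 1 -> x \in `[a, b] -> x \in `[0, 1].
Proof. by move=> a0 b1; rewrite !in_itv /= => /andP[xa xb]; apply/andP; split; lra. Qed.

Lemma in01 {R : realType} {x : R} : x \in `[0, 1] -> 0 <= x /\ x <= 1.
Proof. by rewrite in_itv /= => /andP. Qed.

Lemma in01_0 {R : realType} : (0 : R) \in `[0, 1].
Proof. by rewrite in_itv /= lexx ler01. Qed.

Lemma in01_1 {R : realType} : (1 : R) \in `[0, 1].
Proof. by rewrite in_itv /= lexx ler01. Qed.

Section HasDeriv01.
Context {R : realType} {f df : R -> R}.
Hypothesis f_deriv : has_deriv01 f df.

Lemma has_deriv01_continuous {a b : R} :
  0 <= a -> b <= 1 -> {within `[a, b], continuous f}.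
Proof.
move=> a0 b1; apply/subspace_continuousP => x xab.
have x01 := in_itv01 a0 b1 xab.
apply/cvgrPdist_lt => e e0.
have [d d0 Hd] := f_deriv x x01 1 ltr01.
have r0 : 0 < Num.min d (e / (`|df x| + 1)) by rewrite lt_min d0 divr_gt0 // ltr_wpDl.
rewrite near_withinE; near=> t => tab.
have : `|x - t| < Num.min d (e / (`|df x| + 1)) by near: t; apply: cvgr_dist_lt.
rewrite lt_min => /andP[td te]; rewrite /= distrC.
have := Hd t (in_itv01 a0 b1 tab); rewrite (distrC t x) td mul1r => /(_ isT) Hfx.
rewrite -(subrK (df x * (t - x)) (f t - f x)).
apply: (le_lt_trans (ler_normD _ _)); rewrite normrM (distrC t x).
apply: (le_lt_trans (lerD Hfx (lexx _))).
rewrite -{1}(mul1r `|x - t|) -mulrDl addrC.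
by rewrite -ltr_pdivlMl ?ltr_wpDl // mulrC.
Unshelve. all: by end_near. Qed.

Lemma has_deriv01_is_derive {x : R} : x \in `]0, 1[ -> is_derive x 1 f (df x).
Proof.
move=> x01.
suff hc : (fun h => h^-1 *: (f (h *: 1 + x) - f x)) @ 0^' --> df x.
  by apply: (DeriveDef (cvgP _ hc)); exact: (cvg_lim _ hc).
apply/cvgrPdist_le => e e0.
have [d d0 Hd] := f_deriv x (subset_itv_oo_cc x01) e e0.
have r0 : 0 < Num.min d (Num.min x (1 - x)).
  by move: x01; rewrite in_itv /= => /andP[x0 x1]; rewrite !lt_min d0 x0 subr_gt0 x1.
near=> h.
have : `|h| < Num.min d (Num.min x (1 - x)) by near: h; apply: dnbhs0_lt.
have hn : h != 0 by near: h; exact: nbhs_dnbhs_neq.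
rewrite -[h%:A]/(h * 1) mulr1 !lt_min => /and3P[hd hx h1x].
have hx01 : h + x \in `[0, 1].
  move: hx h1x => /ltr_normlP[? ?] /ltr_normlP[? ?].
  by rewrite in_itv /=; apply/andP; split; lra.
have := Hd (h + x) hx01; rewrite addrK hd => /(_ isT) Hfx.
rewrite -[df x](mulKf hn) -[_ *: _]/(h^-1 * _) -mulrBr normrM normfV.
by rewrite ler_pdivrMl ?normr_gt0 // mulrC distrC [_ * e]mulrC.
Unshelve. all: by end_near. Qed.

Lemma has_deriv01_MVT {a b : R} : 0 <= a -> a <= b -> b <= 1 ->
  exists2 c, c \in `[a, b] & f b - f a = df c * (b - a).
Proof.
move=> a0 ab b1; apply: MVT_segment => //; last exact: has_deriv01_continuous.
move=> x xab; apply: has_deriv01_is_derive.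
by move: xab; rewrite !in_itv /= => /andP[? ?]; apply/andP; split; lra.
Qed.

Lemma has_deriv01_incr {a b : R} : (forall x, x \in `[0, 1] -> 0 < df x) ->
  0 <= a -> a < b -> b <= 1 -> f a < f b.
Proof.
move=> df_pos a0 ab b1; rewrite -subr_gt0.
have [c cab ->] := has_deriv01_MVT a0 (ltW ab) b1.
by rewrite mulr_gt0 ?subr_gt0 // df_pos // (in_itv01 a0 b1).
Qed.

End HasDeriv01.

Section Continuous01.
Context {R : realType} {h : R -> R}.
Hypothesis h_cont : {within `[0, 1], continuous h}.

Lemma continuous01_unif (e : R) : 0 < e ->
  \forall d \near 0^'+, forall x y : R, x \in `[0, 1] -> y \in `[0, 1] ->
    `|x - y| < d -> `|h x - h y| < e.
Proof.
move=> e0.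
have /near_covering_withinP cover := (compact_near_coveringP _).1 (@segment_compact R 0 1).
have [|d0 d00 Hd] := cover R (0^'+) (fun d x => forall y : R, y \in `[0, 1] ->
    `|x - y| < d -> `|h x - h y| < e).
  move=> x x01.
  have := (subspace_continuousP _ _).1 h_cont x x01.
  move=> /cvgr_dist_lt /(_ (e / 2)) /(_ (divr_gt0 e0 (ltr0Sn _ 1))).
  rewrite near_withinE => -[r /= r0 Hr].
  near=> x' d.
  have xx' : `|x - x'| < r / 2 by near: x'; apply: cvgr_dist_lt => //; rewrite divr_gt0.
  have dr : d < r / 2 by near: d; apply: nbhs_right_lt; rewrite divr_gt0.
  move=> /= x'01 y y01 x'y.
  have xy : `|x - y| < r.
    rewrite -(subrKA x') addrC; apply: (le_lt_trans (ler_normD _ _)); lra.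
  have hx' : `|h x - h x'| < e / 2 by apply: Hr x'01 => /=; lra.
  have hy : `|h x - h y| < e / 2 by exact: Hr y01.
  rewrite -(subrKA (h x)) addrC -opprB.
  by apply: (le_lt_trans (ler_normD _ _)); rewrite normrN; lra.
by exists d0 => // d dd0 d0' x y x01 y01; exact: Hd.
Unshelve. all: by end_near. Qed.

Lemma continuous01_oscillation_bounded :
  \forall B \near +oo, forall x y : R, x \in `[0, 1] -> y \in `[0, 1] ->
    `|h x - h y| <= B.
Proof.
have [cM _ hM] := EVT_max ler01 h_cont.
have [cm _ hm] := EVT_min ler01 h_cont.
near=> B => x y x01 y01.
have : h cM - h cm <= B by near: B; apply: nbhs_pinfty_ge; rewrite num_real.
have := hM x x01; have := hM y y01; have := hm x x01; have := hm y y01.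
by move=> *; rewrite ler_norml; apply/andP; split; lra.
Unshelve. all: by end_near. Qed.

End Continuous01.

Definition birkhoff_sum {R : realType} {m : nat} (f : (nat -> 'I_m) -> R)
    (n : nat) (w : nat -> 'I_m) : R :=
  \sum_(0 <= i < n) f (iter i (@shift m) w).

Lemma birkhoff_sumS {R : realType} {m : nat} (f : (nat -> 'I_m) -> R) n w :
  birkhoff_sum f n.+1 w = f w + birkhoff_sum f n (shift w).
Proof.
rewrite /birkhoff_sum big_nat_recl //.
by congr (_ + _); apply: eq_bigr => i _; rewrite iterSr.
Qed.

Lemma compn_addn {R : realType} {m : nat} (T : 'I_m -> R -> R) n k w x :
  compn T (k + n) w x = compn T k w (compn T n (iter k (@shift m) w) x).
Proof. by elim: k w => [|k IH] w //=; rewrite IH -iterS iterSr. Qed.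

Section IFS.
Context {R : realType} {m : nat} {T dT : 'I_m -> R -> R}.
Hypothesis T_maps01 : forall i x, x \in `[0, 1] -> T i x \in `[(0:R), 1].
Hypothesis T_deriv : forall i, has_deriv01 (T i) (dT i).
Hypothesis dT_pos : forall i x, x \in `[0, 1] -> 0 < dT i x.

Lemma compn_in01 n w {x : R} : x \in `[0, 1] -> compn T n w x \in `[0, 1].
Proof. by elim: n w => [|n IH] w //= x01; apply: T_maps01; exact: IH. Qed.

Lemma compn_lt n w {x y : R} :
  0 <= x -> x < y -> y <= 1 -> compn T n w x < compn T n w y.
Proof.
move=> x0 xy y1; elim: n w => [|n IH] w //=.
have x01 : x \in `[0, 1] by rewrite in_itv /=; apply/andP; split; lra.
have y01 : y \in `[0, 1] by rewrite in_itv /=; apply/andP; split; lra.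
have [? _] := in01 (compn_in01 n (shift w) x01).
have [_ ?] := in01 (compn_in01 n (shift w) y01).
exact: (has_deriv01_incr (T_deriv (w 0%N)) (dT_pos (w 0%N))).
Qed.

Lemma compn_le n w {x y : R} :
  0 <= x -> x <= y -> y <= 1 -> compn T n w x <= compn T n w y.
Proof.
move=> x0; rewrite le_eqVlt => /orP[/eqP -> //|xy] y1.
exact/ltW/compn_lt.
Qed.

Lemma compn01_lt n w : compn T n w 0 < compn T n w 1.
Proof. exact: compn_lt. Qed.

Lemma Dn_endpoints n w : Dn T n w = compn T n w 1 - compn T n w 0.
Proof.
set D := compn T n w 1 - compn T n w 0.
set S := [set `|x.1 - x.2| | x in (compn T n w @` `[0, 1]) `*` (compn T n w @` `[0, 1])].
have ubD : ubound S D.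
  move=> _ [[_ _] [[x /in01[x0 x1] <-] [y /in01[y0 y1] <-]] <-] /=.
  have := compn_le n w (lexx 0) x0 x1; have := compn_le n w x0 x1 (lexx 1).
  have := compn_le n w (lexx 0) y0 y1; have := compn_le n w y0 y1 (lexx 1).
  by move=> *; rewrite /D ler_norml; apply/andP; split; lra.
have SD : S D.
  exists (compn T n w 1, compn T n w 0).
    by split; [exists 1 => //; exact: in01_1 | exists 0 => //; exact: in01_0].
  by rewrite /= ger0_norm // subr_ge0 ltW // compn01_lt.
apply/eqP; rewrite eq_le; apply/andP; split.
  by apply: ge_sup => //; exists D.
by apply: sup_upper_bound => //; split; exists D.
Qed.

Lemma Dn_gt0 n w : 0 < Dn T n w.
Proof. by rewrite Dn_endpoints subr_gt0 compn01_lt. Qed.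

Lemma Pi_cylinder k w : compn T k w 0 <= Pi T w <= compn T k w 1.
Proof.
pose u n := compn T n w 0.
have u_nd : nondecreasing_seq u.
  apply/nondecreasing_seqP => n; rewrite /u -addn1 compn_addn.
  have [? ?] := in01 (compn_in01 1 (iter n (@shift m) w) in01_0).
  exact: compn_le.
have u_cvg : cvgn u.
  apply: nondecreasing_is_cvgn => //; exists 1 => _ [n _ <-].
  by have [] := in01 (compn_in01 n w in01_0).
have u_le n : u n <= compn T k w 1.
  have [kn|nk] := leqP k n.
    rewrite /u -(subnKC kn) compn_addn.
    have [? ?] := in01 (compn_in01 (n - k) (iter k (@shift m) w) in01_0).
    exact: compn_le.
  by apply: le_trans (u_nd _ _ (ltnW nk)) _; apply: compn_le.
apply/andP; split; first exact: nondecreasing_cvgn_le.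
by apply: limr_le => //; apply: nearW.
Qed.

Lemma Pi_in01 w : Pi T w \in `[0, 1].
Proof.
have /andP[lo hi] := Pi_cylinder 0 w.
by rewrite in_itv /= lo hi.
Qed.

Lemma Dn_S n w : exists2 c,
  c \in `[compn T n (shift w) 0, compn T n (shift w) 1] &
  Dn T n.+1 w = dT (w 0%N) c * Dn T n (shift w).
Proof.
have [a0 _] := in01 (compn_in01 n (shift w) in01_0).
have [_ b1] := in01 (compn_in01 n (shift w) in01_1).
have [c cab Hc] := has_deriv01_MVT (T_deriv (w 0%N)) a0 (ltW (compn01_lt n _)) b1.
by exists c => //; rewrite !Dn_endpoints -Hc.
Qed.

Lemma ln_Dn_birkhoff_error {e B eta : R} {N : nat} : 0 <= e ->
  (forall i x y, x \in `[0, 1] -> y \in `[0, 1] -> `|x - y| < eta ->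
     `|ln (dT i x) - ln (dT i y)| <= e) ->
  (forall i x y, x \in `[0, 1] -> y \in `[0, 1] ->
     `|ln (dT i x) - ln (dT i y)| <= B) ->
  (forall n, (N <= n)%N -> forall w, `|Dn T n w| < eta) ->
  forall n w, `|ln (Dn T n w) + birkhoff_sum (g T dT) n w|
                <= n%:R * e + (minn n N)%:R * B.
Proof.
move=> e0 ln_dT_close ln_dT_bounded Dn_small.
elim=> [|n IH] w.
  by rewrite Dn_endpoints /= subr0 ln1 /birkhoff_sum big_geq // addr0 normr0 min0n !mul0r addr0.
have [c cab HDn] := Dn_S n w.
have c01 : c \in `[0, 1].
  have [a0 _] := in01 (compn_in01 n (shift w) in01_0).
  have [_ b1] := in01 (compn_in01 n (shift w) in01_1).
  exact: in_itv01 a0 b1 cab.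
have split_err : ln (Dn T n.+1 w) + birkhoff_sum (g T dT) n.+1 w =
    (ln (dT (w 0%N) c) - ln (dT (w 0%N) (Pi T (shift w)))) +
    (ln (Dn T n (shift w)) + birkhoff_sum (g T dT) n (shift w)).
  rewrite HDn lnM ?posrE ?dT_pos ?Dn_gt0 // birkhoff_sumS /g; ring.
rewrite split_err; apply: (le_trans (ler_normD _ _)).
have := ln_dT_bounded (w 0%N) c (Pi T (shift w)) c01 (Pi_in01 _).
have := IH (shift w); rewrite -natr1 mulrDl mul1r.
have [Nn|nN] := leqP N n.
  rewrite !(minn_idPr _) ?(ltnW (leq_ltn_trans Nn _)) //.
  have cP : `|c - Pi T (shift w)| < eta.
    apply: le_lt_trans (Dn_small n Nn (shift w)).
    rewrite (ger0_norm (ltW (Dn_gt0 n _))) Dn_endpoints.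
    have /andP[P0 P1] := Pi_cylinder n (shift w).
    move: cab; rewrite in_itv /= => /andP[? ?].
    by rewrite ler_norml; apply/andP; split; lra.
  have := ln_dT_close (w 0%N) c (Pi T (shift w)) c01 (Pi_in01 _) cP; lra.
rewrite !(minn_idPl _) ?(ltnW nN) // -natr1 mulrDl mul1r; lra.
Qed.

End IFS.

Section LnDerivative.
Context {R : realType} {m : nat} {dT : 'I_m -> R -> R}.
Hypothesis dT_cont : forall i, {within `[0, 1], continuous (dT i)}.
Hypothesis dT_pos : forall i x, x \in `[0, 1] -> 0 < dT i x.

Lemma ln_dT_continuous i : {within `[0, 1], continuous (fun x => ln (dT i x))}.
Proof.
apply/subspace_continuousP => x x01.
have := (subspace_continuousP _ _).1 (dT_cont i) x x01.
by apply: continuous_cvg; apply/continuous_ln/dT_pos.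
Qed.

Lemma ln_dT_unif_continuous (e : R) : 0 < e ->
  exists2 eta : R, 0 < eta & forall i x y, x \in `[0, 1] -> y \in `[0, 1] ->
    `|x - y| < eta -> `|ln (dT i x) - ln (dT i y)| <= e.
Proof.
move=> e0.
have [r /= r0 Hr] : \forall d \near 0^'+, forall i x y,
    x \in `[0, 1] -> y \in `[0, 1] -> `|x - y| < d ->
    `|ln (dT i x) - ln (dT i y)| < e.
  by apply: filter_forall => i; exact: continuous01_unif (ln_dT_continuous i) e e0.
have r20 : 0 < r / 2 by rewrite divr_gt0.
exists (r / 2) => // i x y x01 y01 xy; apply/ltW/(Hr (r / 2)) => //.
by rewrite /ball_ /= sub0r normrN gtr0_norm //; lra.
Qed.

Lemma ln_dT_oscillation_bounded : exists2 B : R, 0 <= B & forall i x y,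
  x \in `[0, 1] -> y \in `[0, 1] -> `|ln (dT i x) - ln (dT i y)| <= B.
Proof.
have [M [_ HM]] : \forall B \near +oo, forall i x y,
    x \in `[0, 1] -> y \in `[0, 1] -> `|ln (dT i x) - ln (dT i y)| <= B.
  by apply: filter_forall => i; exact: continuous01_oscillation_bounded (ln_dT_continuous i).
exists (`|M| + 1); first by rewrite addr_ge0.
by apply: HM; rewrite ltr_pwDr // real_ler_norm ?num_real.
Qed.

End LnDerivative.

Lemma linear_bound_divn {R : realType} (e C : R) : 0 < e ->
  exists K : nat, forall (n : nat) (x : R), (K <= n)%N ->
    `|x| <= n%:R * e + C -> `|n%:R^-1 * x| <= 2 * e.
Proof.
move=> e0; have Ce0 : 0 <= `|C| / e by rewrite divr_ge0 // ltW.
exists (Num.Def.archi_bound (`|C| / e)).+1 => n x Kn xle.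
have n0 : 0 < n%:R :> R by rewrite ltr0n (leq_trans _ Kn).
have Cle : `|C| <= n%:R * e.
  rewrite -ler_pdivrMr //; apply/ltW/(lt_le_trans (archi_boundP Ce0)).
  by rewrite ler_nat ltnW.
rewrite normrM gtr0_norm ?invr_gt0 // ler_pdivrMl //.
have := ler_norm C; lra.
Qed.

Theorem lemma1 (R : realType) (m : nat) (T dT : 'I_m -> R -> R)
  (hmaps : forall i x, x \in `[0, 1] -> T i x \in `[(0:R), 1])
  (hC1 : forall i, C1_01 (T i) (dT i))
  (hpos : forall i x, x \in `[0, 1] -> 0 < dT i x)
  (hdisj : forall i j : 'I_m, i != j ->
     T i @` `]0, 1[ `&` T j @` `]0, 1[ = set0)
  (hD : forall eps : R, 0 < eps -> exists N : nat, forall n : nat, (N <= n)%N ->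
     forall w : nat -> 'I_m, `|Dn T n w| < eps) :
  forall eps : R, 0 < eps -> exists N : nat, forall n : nat, (N <= n)%N ->
    forall w : nat -> 'I_m,
      `| - (n%:R^-1 * ln (Dn T n w)) - An T dT n w | <= eps.
Proof.
move=> eps eps0.
have e0 : 0 < eps / 2 by rewrite divr_gt0.
have [eta eta0 ln_dT_close] := ln_dT_unif_continuous (fun i => (hC1 i).2) hpos _ e0.
have [B B0 ln_dT_bounded] := ln_dT_oscillation_bounded (fun i => (hC1 i).2) hpos.
have [N Dn_small] := hD eta eta0.
have [K HK] := linear_bound_divn _ (N%:R * B) e0.
exists K => n Kn w.
have -> : - (n%:R^-1 * ln (Dn T n w)) - An T dT n w =
    - (n%:R^-1 * (ln (Dn T n w) + birkhoff_sum (g T dT) n w)).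
  by rewrite /An /birkhoff_sum; ring.
rewrite normrN (_ : eps = 2 * (eps / 2)); last by rewrite mulrC divfK ?pnatr_eq0.
apply: HK Kn _; apply: le_trans (ln_Dn_birkhoff_error hmaps (fun i => (hC1 i).1) hpos (ltW e0)
  ln_dT_close ln_dT_bounded Dn_small n w) _.
by rewrite lerD2l ler_wpM2r // ler_nat geq_minr.
Qed.
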